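(* Let $X$ be a finite connected poset of length $1$. If $|\mathrm{Min}(X)|>1$ and $|\mathrm{Max}(X)|>1$, then there are two disjoint maximal chains $C,D$ in $X$.
   Context: The length of $X$ is the maximum of $|C|-1$ over chains $C\subseteq X$. $\mathrm{Min}(X)$ and $\mathrm{Max}(X)$ are the sets of minimal and maximal elements of $X$. $X$ is connected if any two elements are joined by a sequence of elements with consecutive ones comparable. *)

From mathcomp Require Import all_boot all_order.
Set Implicit Arguments. Unset Strict Implicit. Unset Printing Implicit Defensive.
Import Order.Theory.
Local Open Scope order_scope.

Definition is_chain d (T : finPOrderType d) (C : {set T}) : bool :=
  [forall x in C, forall y in C, x >=< y].

Definition is_maximal_chain d (T : finPOrderType d) (C : {set T}) : bool :=
  is_chain C && [forall D : {set T}, (is_chain D && (C \subset D)) ==> (D == C)].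

Definition poset_length d (T : finPOrderType d) : nat :=
  \max_(C : {set T} | is_chain C) (#|C|.-1).

Definition minset_el d (T : finPOrderType d) : {set T} :=
  [set x : T | [forall y : T, (y <= x) ==> (y == x)]].
Definition maxset_el d (T : finPOrderType d) : {set T} :=
  [set x : T | [forall y : T, (x <= y) ==> (y == x)]].

Definition poset_connected d (T : finPOrderType d) : Prop :=
  forall x y : T, connect (fun a b : T => a >=< b) x y.

(* In a poset of length 1 every maximal chain is a single isolated point or
   an edge x < y, and two edges are disjoint as soon as their bottoms and
   their tops differ, since an element cannot be both a bottom and a top.
   Start from an edge a < b and a minimal element m <> a.  Either m is
   isolated, or m < y, giving the disjoint edge m < y unless y = b.  In the
   latter case pick a maximal element M <> b: it is isolated, or z < M, and
   then either a < b, z < M (if z <> a) or m < b, a < M are disjoint. *)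
From mathcomp Require Import all_boot all_order.
Import Order.Theory.

Section MaximalChains.
Local Open Scope order_scope.
Context {d : Order.disp_t} {T : finPOrderType d}.
Implicit Types (x y z u v : T) (C : {set T}).

Definition disjoint_maximal_chains_exist : Prop :=
  exists C D : {set T},
    [/\ is_maximal_chain C, is_maximal_chain D & [disjoint C & D]].

Definition isolated x : Prop := forall y, x >=< y -> y = x.

Lemma is_chainP C : reflect {in C &, forall x y, x >=< y} (is_chain C).
Proof.
apply: (iffP forall_inP) => [chC x y xC yC | chC x xC].
  exact: (forall_inP (chC x xC)).
by apply/forall_inP => y yC; apply: chC.
Qed.

Lemma is_chain1 x : is_chain [set x].
Proof.
by apply/is_chainP => u v; rewrite !inE => /eqP-> /eqP->; apply: comparablexx.
Qed.

Lemma is_chain2 x y : x <= y -> is_chain [set x; y].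
Proof.
move=> lexy; apply/is_chainP => u v; rewrite !inE.
move=> /orP[]/eqP-> /orP[]/eqP->;
  by [apply: comparablexx | apply: le_comparable | apply: ge_comparable].
Qed.

Lemma is_maximal_chain_closed C :
  is_chain C -> (forall z, {in C, forall x, z >=< x} -> z \in C) ->
  is_maximal_chain C.
Proof.
move=> chC closedC; rewrite /is_maximal_chain chC.
apply/forallP => D; apply/implyP => /andP[/is_chainP chD sCD].
rewrite eqEsubset sCD andbT; apply/subsetP => z zD.
by apply: closedC => x xC; apply: chD; last exact: (subsetP sCD).
Qed.

Lemma isolated_maximal_chain x : isolated x -> is_maximal_chain [set x].
Proof.
move=> isox; apply: is_maximal_chain_closed (is_chain1 x) _ => z.
by move=> /(_ x (set11 x)); rewrite comparable_sym => /isox->; apply: set11.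
Qed.

Lemma chain_card_le_length {C} : is_chain C -> (#|C|.-1 <= poset_length T)%N.
Proof. exact: (leq_bigmax_cond (F := fun C : {set T} => #|C|.-1)). Qed.

Lemma exists_lt_of_length_gt0 : (0 < poset_length T)%N -> exists x y, x < y.
Proof.
move=> length_gt0.
have [/existsP[x /existsP[y ltxy]] | /existsPn no_lt] :=
  boolP [exists x : T, exists y : T, x < y]; first by exists x, y.
suff : (poset_length T <= 0)%N by rewrite leqNgt length_gt0.
apply/bigmax_leqP => C /is_chainP chC; rewrite leqn0 -subn1 subn_eq0.
apply/card_le1_eqP => x y xC yC.
have /existsPn/(_ y) nltxy := no_lt x; have /existsPn/(_ x) nltyx := no_lt y.
by case: (comparable_ltgtP (chC x y xC yC)) nltxy nltyx.
Qed.

Lemma minset_el_isolated_or_lt {x} :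
  x \in minset_el T -> isolated x \/ exists y, x < y.
Proof.
rewrite inE => /forallP minx.
have [/existsP[y ltxy] | /existsPn no_gt] := boolP [exists y, x < y].
  by right; exists y.
left => y /comparable_ltgtP[ltxy | ltyx | //].
  by have := no_gt y; rewrite ltxy.
by have := minx y; rewrite (ltW ltyx) (lt_eqF ltyx).
Qed.

Lemma maxset_el_isolated_or_gt {x} :
  x \in maxset_el T -> isolated x \/ exists y, y < x.
Proof.
rewrite inE => /forallP maxx.
have [/existsP[y ltyx] | /existsPn no_lt] := boolP [exists y, y < x].
  by right; exists y.
left => y /comparable_ltgtP[ltxy | ltyx | //].
  by have := maxx y; rewrite (ltW ltxy) (gt_eqF ltxy).
by have := no_lt y; rewrite ltyx.
Qed.

Lemma isolated_edge_disjoint x y u :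
  x < y -> isolated u -> [disjoint [set x; y] & [set u]].
Proof.
move=> ltxy isou; rewrite disjoint_sym disjoints1 !inE negb_or.
apply/andP; split; apply/eqP => equ; rewrite equ in isou.
  by have eqyx := isou y (lt_comparable ltxy); rewrite eqyx ltxx in ltxy.
by have eqxy := isou x (gt_comparable ltxy); rewrite eqxy ltxx in ltxy.
Qed.

Section LengthAtMostOne.
Hypothesis length_le1 : (poset_length T <= 1)%N.

Lemma no_lt_chain3 {x y z} : x < y -> y < z -> False.
Proof.
move=> ltxy ltyz; have ltxz := lt_trans ltxy ltyz.
have ch3 : is_chain [set x; y; z].
  apply/is_chainP => u v; rewrite !inE.
  move=> /orP[/orP[]|]/eqP-> /orP[/orP[]|]/eqP->;
    by [apply: comparablexx | apply: lt_comparable | apply: gt_comparable].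
have := leq_trans (chain_card_le_length ch3) length_le1.
by rewrite setUC cardsU1 cards2 !inE (gt_eqF ltxz) (gt_eqF ltyz) (lt_eqF ltxy).
Qed.

Lemma edge_maximal_chain x y : x < y -> is_maximal_chain [set x; y].
Proof.
move=> ltxy; apply: is_maximal_chain_closed => [|z cmpz].
  exact: is_chain2 (ltW ltxy).
have cmpzx := cmpz x (set21 x y); have cmpzy := cmpz y (set22 x y).
rewrite !inE; case: (comparable_ltgtP cmpzx) => // [ltzx | ltxz].
  by case: (no_lt_chain3 ltzx ltxy).
case: (comparable_ltgtP cmpzy) => // [ltzy | ltyz].
  by case: (no_lt_chain3 ltxz ltzy).
by case: (no_lt_chain3 ltxy ltyz).
Qed.

Lemma edges_disjoint x y u v :
  x < y -> u < v -> x != u -> y != v -> [disjoint [set x; y] & [set u; v]].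
Proof.
move=> ltxy ltuv neqxu neqyv; rewrite -setI_eq0 -subset0.
apply/subsetP => w; rewrite !inE => /andP[/orP[]/eqP-> /orP[]/eqP eq_w].
- by rewrite eq_w eqxx in neqxu.
- by rewrite -eq_w in ltuv; case: (no_lt_chain3 ltuv ltxy).
- by rewrite -eq_w in ltuv; case: (no_lt_chain3 ltxy ltuv).
- by rewrite eq_w eqxx in neqyv.
Qed.

Lemma edges_disjoint_maximal_chains {x y u v} :
  x < y -> u < v -> x != u -> y != v -> disjoint_maximal_chains_exist.
Proof.
move=> ltxy ltuv neqxu neqyv; exists [set x; y], [set u; v].
by split; [exact: edge_maximal_chain | exact: edge_maximal_chain |
  exact: edges_disjoint].
Qed.

Lemma edge_isolated_disjoint_maximal_chains {x y u} :
  x < y -> isolated u -> disjoint_maximal_chains_exist.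
Proof.
move=> ltxy isou; exists [set x; y], [set u].
by split; [exact: edge_maximal_chain | exact: isolated_maximal_chain |
  exact: isolated_edge_disjoint].
Qed.

End LengthAtMostOne.
End MaximalChains.

Lemma card_gt1_exists_neq {T : finType} {A : {pred T}} (a : T) :
  1 < #|A| -> exists2 x, x \in A & x != a.
Proof.
case/card_gt1P => x [y [xA yA neqxy]].
case: (eqVneq x a) => [eqxa | neqxa]; last by exists x.
by exists y; rewrite // -eqxa eq_sym.
Qed.

Theorem lemma4p5 (d : Order.disp_t) (T : finPOrderType d) :
  poset_connected T ->
  poset_length T = 1 ->
  1 < #|minset_el T| ->
  1 < #|maxset_el T| ->
  exists C D : {set T},
    [/\ is_maximal_chain C, is_maximal_chain D & [disjoint C & D]].
Proof.
move=> _ length1 min_gt1 max_gt1.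
have le1 : poset_length T <= 1 by rewrite length1.
have [a [b ltab]] : exists a b : T, (a < b)%O.
  by apply: exists_lt_of_length_gt0; rewrite length1.
have [m minm neqma] := card_gt1_exists_neq a min_gt1.
have [isom | [y ltmy]] := minset_el_isolated_or_lt minm.
  exact: (edge_isolated_disjoint_maximal_chains le1 ltab isom).
have [eqyb | neqyb] := eqVneq y b; last first.
  by apply: (edges_disjoint_maximal_chains le1 ltab ltmy); rewrite eq_sym.
have [M maxM neqMb] := card_gt1_exists_neq b max_gt1.
have [isoM | [z ltzM]] := maxset_el_isolated_or_gt maxM.
  exact: (edge_isolated_disjoint_maximal_chains le1 ltab isoM).
have [eqza | neqza] := eqVneq z a; last first.
  by apply: (edges_disjoint_maximal_chains le1 ltab ltzM); rewrite eq_sym.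
rewrite eqyb in ltmy; rewrite eqza in ltzM.
by apply: (edges_disjoint_maximal_chains le1 ltmy ltzM); rewrite // eq_sym.
Qed.
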